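(* Let $1<p<\infty$ and $\eta(y)=y/(1-y)$ for $y\in(0,1)$. (a) If $a\in SO(\mathbb{R}_+)$, then $a\circ\eta\in SO(\mathbb{I})$. (b) If $\alpha\in SOS(\mathbb{R}_+)$, then $\widetilde\alpha:=\eta^{-1}\circ\alpha\circ\eta\in SOS(\mathbb{I})$, the function $c_{\alpha,p}(y):=\big(\frac{1-\widetilde\alpha(y)}{1-y}\big)^{2/p}$, $y\in\mathbb{I}$, belongs to $SO(\mathbb{I})$, and \[ 0<\inf_{y\in\mathbb{I}}c_{\alpha,p}(y)\le\sup_{y\in\mathbb{I}}c_{\alpha,p}(y)<+\infty. \]
   Context: $\mathbb{R}_+=(0,\infty)$, $\mathbb{I}=(0,1)$; $\eta^{-1}(t)=t/(1+t)$. $C_b(X)$: bounded continuous complex functions on $X$. $\operatorname{osc}(f,[\lambda r,r]):=\sup\{|f(t)-f(\tau)|:t,\tau\in[\lambda r,r]\}$. $SO(\mathbb{R}_+)$: $f\in C_b(\mathbb{R}_+)$ with $\lim_{r\to s}\operatorname{osc}(f,[\lambda r,r])=0$ for $s\in\{0,\infty\}$ and each (equivalently some) $\lambda\in(0,1)$. $SO(\mathbb{I})$: $\varphi\in C_b(\mathbb{I})$ such that $\lim_{r\to0}\operatorname{osc}(\varphi,[\lambda r,r])=0$ and $\lim_{r\to0}\operatorname{osc}(\varphi(1-\cdot),[\lambda r,r])=0$ for each (equivalently some) $\lambda\in(0,1)$. $SOS(\mathbb{R}_+)$: orientation-preserving diffeomorphisms $\alpha$ of $\mathbb{R}_+$ onto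 itself with no fixed points in $\mathbb{R}_+$, $\log\alpha'\in C_b(\mathbb{R}_+)$, $\alpha'\in SO(\mathbb{R}_+)$. $SOS(\mathbb{I})$: orientation-preserving diffeomorphisms of $\mathbb{I}$ onto itself with no fixed points in $\mathbb{I}$ (only fixed points $0,1$), with $\log\alpha'\in C_b(\mathbb{I})$ and $\alpha'\in SO(\mathbb{I})$. *)

From Stdlib Require Import Reals Lra.
From Coquelicot Require Import Coquelicot.
Open Scope R_scope.

Definition Rplus_set (x : R) : Prop := 0 < x.
Definition I_set (x : R) : Prop := 0 < x < 1.

Definition eta (y : R) : R := y / (1 - y).
Definition eta_inv (t : R) : R := t / (1 + t).

Definition Cb (D : R -> Prop) (f : R -> C) : Prop :=
  (forall x, D x -> continuous f x) /\
  (exists M : R, forall x, D x -> Cmod (f x) <= M).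

Definition osc (f : R -> C) (lam r : R) : Rbar :=
  Lub_Rbar (fun z => exists t tau, lam * r <= t <= r /\ lam * r <= tau <= r /\
                                   z = Cmod (f t - f tau)).

Definition osc_to0_at0 (f : R -> C) (lam : R) : Prop :=
  forall eps : R, 0 < eps -> exists delta : R, 0 < delta /\
    forall r, 0 < r < delta -> Rbar_le (osc f lam r) (Finite eps).

Definition osc_to0_atoo (f : R -> C) (lam : R) : Prop :=
  forall eps : R, 0 < eps -> exists N : R,
    forall r, N < r -> Rbar_le (osc f lam r) (Finite eps).

Definition SO_Rplus (f : R -> C) : Prop :=
  Cb Rplus_set f /\
  (forall lam, 0 < lam < 1 -> osc_to0_at0 f lam /\ osc_to0_atoo f lam).

Definition SO_I (phi : R -> C) : Prop :=
  Cb I_set phi /\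
  (forall lam, 0 < lam < 1 ->
     osc_to0_at0 phi lam /\ osc_to0_at0 (fun x => phi (1 - x)) lam).

Definition orient_diffeo (D : R -> Prop) (alpha : R -> R) : Prop :=
  (forall x, D x -> D (alpha x)) /\
  (forall y, D y -> exists x, D x /\ alpha x = y) /\
  (forall x y, D x -> D y -> x < y -> alpha x < alpha y) /\
  (forall x, D x -> ex_derive alpha x) /\
  (forall x, D x -> continuous (Derive alpha) x) /\
  (exists beta : R -> R,
     (forall y, D y -> D (beta y) /\ alpha (beta y) = y) /\
     (forall x, D x -> beta (alpha x) = x) /\
     (forall y, D y -> ex_derive beta y) /\
     (forall y, D y -> continuous (Derive beta) y)).

Definition no_fixed_points (D : R -> Prop) (alpha : R -> R) : Prop :=
  forall x, D x -> alpha x <> x.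

Definition SOS (D : R -> Prop) (SO : (R -> C) -> Prop) (alpha : R -> R) : Prop :=
  orient_diffeo D alpha /\ no_fixed_points D alpha /\
  Cb D (fun x => RtoC (ln (Derive alpha x))) /\
  SO (fun x => RtoC (Derive alpha x)).

Definition SOS_Rplus := SOS Rplus_set SO_Rplus.
Definition SOS_I := SOS I_set SO_I.

Definition alpha_tilde (alpha : R -> R) (y : R) : R := eta_inv (alpha (eta y)).

Definition c_alpha_p (alpha : R -> R) (p : R) (y : R) : R :=
  Rpower ((1 - alpha_tilde alpha y) / (1 - y)) (2 / p).

Definition range_on (D : R -> Prop) (f : R -> R) : R -> Prop :=
  fun z => exists y, D y /\ z = f y.

(* Conjugation by [eta] sends the endpoints 0 and +oo of R_+ to the endpoints 0 and 1
   of I: near 0, [eta y] is comparable to [y] and [eta (1 - x) = 1/x - 1], so dilation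
   intervals [[lam r, r]] are mapped into dilation intervals and slow oscillation is
   transported.  For [alpha] in SOS(R_+), the bound on [ln alpha'] gives
   [m <= alpha' <= M], hence [m t <= alpha t <= M t].  With [t = eta y] and
   [g t = (1 + t) / (1 + alpha t)], which stays in [[1/(1+M), 1 + 1/m]], the chain rule
   gives [alpha~' y = alpha' t * (g t)^2] and [c_{alpha,p} y = (g t)^(2/p)].  Finally [g]
   tends to 1 at 0, while at +oo it is asymptotic to [t / alpha t], which the mean value
   theorem and the slow oscillation of [alpha'] make close to [1 / alpha' t]. *)

From Stdlib Require Import Reals Lra.
From Coquelicot Require Import Coquelicot.
Open Scope R_scope.

(** * Slow oscillation along a filter *)

Definition slowly_osc {T : Type} (dist : T -> T -> R) (F : (R -> Prop) -> Prop)
    (f : R -> T) : Prop :=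
  forall lam, 0 < lam < 1 -> forall eps, 0 < eps -> F (fun r =>
    forall t tau, lam * r <= t <= r -> lam * r <= tau <= r -> dist (f t) (f tau) <= eps).

Notation slowly_osc_C := (slowly_osc (fun u v : C => Cmod (u - v))).
Notation slowly_osc_R := (slowly_osc (fun u v : R => Rabs (u - v))).

Lemma osc_le_iff f lam r eps :
  Rbar_le (osc f lam r) (Finite eps) <->
  forall t tau, lam * r <= t <= r -> lam * r <= tau <= r -> Cmod (f t - f tau) <= eps.
Proof.
  unfold osc.
  match goal with |- Rbar_le (Lub_Rbar ?E) _ <-> _ =>
    destruct (Lub_Rbar_correct E) as [Hub Hlub] end.
  split.
  - intros Hle t tau Ht Htau.
    refine (Rbar_le_trans (Finite _) _ (Finite eps) _ Hle).
    apply Hub. now exists t, tau.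
  - intros Hbound. apply Hlub. intros z (t & tau & Ht & Htau & ->). now apply Hbound.
Qed.

Lemma at_right0_iff (P : R -> Prop) :
  at_right 0 P <-> exists d, 0 < d /\ forall r, 0 < r < d -> P r.
Proof.
  split.
  - intros [d Hd]. exists d. split; [apply cond_pos|].
    intros r Hr. apply Hd; [|tauto].
    change (Rabs (r - 0) < d). rewrite Rminus_0_r, Rabs_right; lra.
  - intros (d & Hd & HP). exists (mkposreal d Hd). intros r Hr Hr0. apply HP.
    change (Rabs (r - 0) < d) in Hr. rewrite Rminus_0_r, Rabs_right in Hr; lra.
Qed.

Lemma at_right0_pos : at_right 0 (fun r => 0 < r).
Proof. apply at_right0_iff. exists 1. split; [lra|]. intros r Hr. lra. Qed.

Lemma at_right0_dilate lam : 0 < lam < 1 -> forall P, at_right 0 P ->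
  at_right 0 (fun r => forall t, lam * r <= t <= r -> P t).
Proof.
  intros Hlam P HP. apply at_right0_iff in HP as (d & Hd & HP).
  apply at_right0_iff. exists d. split; [exact Hd|]. intros r Hr t Ht.
  apply HP. nra.
Qed.

Lemma p_infty_pos : Rbar_locally p_infty (fun r => 0 < r).
Proof. exists 0. intros r Hr. exact Hr. Qed.

Lemma p_infty_dilate lam : 0 < lam < 1 -> forall P, Rbar_locally p_infty P ->
  Rbar_locally p_infty (fun r => forall t, lam * r <= t <= r -> P t).
Proof.
  intros Hlam P [N HN]. exists (Rabs N / lam). intros r Hr t Ht. apply HN.
  pose proof (Rle_abs N). pose proof (Rabs_pos N).
  assert (lam * (Rabs N / lam) < lam * r) by (apply Rmult_lt_compat_l; lra).
  replace (lam * (Rabs N / lam)) with (Rabs N) in * by (field; lra). lra.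
Qed.

Lemma osc_to0_at0_slowly_osc f :
  (forall lam, 0 < lam < 1 -> osc_to0_at0 f lam) -> slowly_osc_C (at_right 0) f.
Proof.
  intros Hosc lam Hlam eps Heps. apply at_right0_iff.
  destruct (Hosc lam Hlam eps Heps) as (d & Hd & Hr).
  exists d. split; [exact Hd|]. intros r Hr'. apply osc_le_iff, Hr, Hr'.
Qed.

Lemma slowly_osc_osc_to0_at0 f :
  slowly_osc_C (at_right 0) f -> forall lam, 0 < lam < 1 -> osc_to0_at0 f lam.
Proof.
  intros Hf lam Hlam eps Heps.
  destruct (proj1 (at_right0_iff _) (Hf lam Hlam eps Heps)) as (d & Hd & Hr).
  exists d. split; [exact Hd|]. intros r Hr'. apply osc_le_iff, Hr, Hr'.
Qed.

Lemma SO_Rplus_slowly_osc f :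
  SO_Rplus f -> Cb Rplus_set f /\ slowly_osc_C (at_right 0) f /\
                slowly_osc_C (Rbar_locally p_infty) f.
Proof.
  intros [Hcb Hosc]. split; [exact Hcb|split].
  - apply osc_to0_at0_slowly_osc. intros lam Hlam. apply Hosc, Hlam.
  - intros lam Hlam eps Heps. destruct (proj2 (Hosc lam Hlam) eps Heps) as [N HN].
    exists N. intros r Hr. apply osc_le_iff, HN, Hr.
Qed.

Lemma SO_I_of_slowly_osc f :
  Cb I_set f -> slowly_osc_C (at_right 0) f ->
  slowly_osc_C (at_right 0) (fun x => f (1 - x)) -> SO_I f.
Proof.
  intros Hcb H0 H1. split; [exact Hcb|]. intros lam Hlam.
  split; apply slowly_osc_osc_to0_at0; assumption.
Qed.

Lemma osc_to0_at0_ext f g lam : 0 < lam ->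
  (forall t, 0 < t < 1 -> f t = g t) -> osc_to0_at0 f lam -> osc_to0_at0 g lam.
Proof.
  intros Hlam Hfg Hf eps Heps. destruct (Hf eps Heps) as (d & Hd & Hr).
  exists (Rmin d 1). split; [apply Rmin_pos; lra|]. intros r Hr'.
  pose proof (Rmin_l d 1). pose proof (Rmin_r d 1).
  apply osc_le_iff. intros t tau Ht Htau. rewrite <- !Hfg by nra.
  apply (proj1 (osc_le_iff f lam r eps)); [apply Hr|..]; lra.
Qed.

Lemma locally_I y : I_set y -> locally y I_set.
Proof.
  intros [H0 H1]. assert (Hd : 0 < Rmin y (1 - y)) by (apply Rmin_pos; lra).
  exists (mkposreal _ Hd). intros z Hz. change (Rabs (z - y) < Rmin y (1 - y)) in Hz.
  pose proof (Rmin_l y (1 - y)). pose proof (Rmin_r y (1 - y)).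
  apply Rabs_lt_between' in Hz. split; lra.
Qed.

Lemma SO_I_ext f g : (forall y, I_set y -> f y = g y) -> SO_I f -> SO_I g.
Proof.
  intros Hfg [[Hcont [B HB]] Hosc]. split; [split|].
  - intros y Hy. apply (continuous_ext_loc _ f); [|apply Hcont, Hy].
    generalize (locally_I y Hy). apply filter_imp. intros z Hz. apply Hfg, Hz.
  - exists B. intros y Hy. rewrite <- Hfg by exact Hy. apply HB, Hy.
  - intros lam Hlam. destruct (Hosc lam Hlam) as [H0 H1].
    split.
    + refine (osc_to0_at0_ext _ _ lam (proj1 Hlam) _ H0). intros t Ht. apply Hfg, Ht.
    + refine (osc_to0_at0_ext _ _ lam (proj1 Hlam) _ H1). intros t Ht. apply Hfg. red; lra.
Qed.

(** * The change of variables [eta] *)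

Lemma eta_between t : 0 < t <= 1/2 -> t <= eta t <= 2 * t.
Proof.
  intros Ht. unfold eta.
  split; [apply Rle_div_r|apply Rle_div_l]; lra || nra.
Qed.

Lemma eta_one_minus t : 0 < t -> eta (1 - t) = / t - 1.
Proof. intros Ht. unfold eta. field. lra. Qed.

Lemma eta_pos y : I_set y -> 0 < eta y.
Proof. intros [H0 H1]. unfold eta. apply Rdiv_lt_0_compat; lra. Qed.

Lemma continuous_eta y : y < 1 -> continuous eta y.
Proof.
  intros Hy. apply (ex_derive_continuous (K := R_AbsRing) (V := R_NormedModule)).
  unfold eta. auto_derive. lra.
Qed.

Lemma eta_inv_I s : 0 < s -> I_set (eta_inv s).
Proof.
  intros Hs. unfold eta_inv. split; [apply Rdiv_lt_0_compat; lra|].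
  apply Rlt_div_l; lra.
Qed.

Lemma eta_eta_inv s : 0 < s -> eta (eta_inv s) = s.
Proof. intros Hs. unfold eta, eta_inv. field. split; lra. Qed.

Lemma eta_inv_eta y : y < 1 -> eta_inv (eta y) = y.
Proof.
  intros Hy. unfold eta, eta_inv.
  replace (1 + y / (1 - y)) with (/ (1 - y)) by (field; lra). field. lra.
Qed.

Lemma eta_lt x y : I_set x -> I_set y -> x < y -> eta x < eta y.
Proof.
  intros [Hx0 Hx1] [Hy0 Hy1] Hxy.
  assert (E : eta y - eta x = (y - x) / ((1 - x) * (1 - y))) by (unfold eta; field; lra).
  assert (0 < (y - x) / ((1 - x) * (1 - y))) by (apply Rdiv_lt_0_compat; nra). lra.
Qed.

Lemma eta_inv_lt x y : 0 < x -> 0 < y -> x < y -> eta_inv x < eta_inv y.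
Proof.
  intros Hx Hy Hxy.
  assert (E : eta_inv y - eta_inv x = (y - x) / ((1 + x) * (1 + y)))
    by (unfold eta_inv; field; lra).
  assert (0 < (y - x) / ((1 + x) * (1 + y))) by (apply Rdiv_lt_0_compat; nra). lra.
Qed.

Lemma slowly_osc_comp {T : Type} (dist : T -> T -> R) F G {FG : Filter G}
    (f : R -> T) (phi : R -> R) :
  (forall lam, 0 < lam < 1 -> exists lam' rho, 0 < lam' < 1 /\ filterlim rho G F /\
     G (fun r => forall t, lam * r <= t <= r -> lam' * rho r <= phi t <= rho r)) ->
  slowly_osc dist F f -> slowly_osc dist G (fun t => f (phi t)).
Proof.
  intros Hphi Hf lam Hlam eps Heps.
  destruct (Hphi lam Hlam) as (lam' & rho & Hlam' & Hrho & Hin).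
  pose proof (Hrho _ (Hf lam' Hlam' eps Heps)) as Hosc.
  unfold filtermap in Hosc. generalize (filter_and _ _ Hin Hosc).
  apply filter_imp. intros r [Hmap Hr] t tau Ht Htau.
  apply Hr; apply Hmap; assumption.
Qed.

Lemma eta_dilation_at0 lam : 0 < lam < 1 ->
  exists lam' rho, 0 < lam' < 1 /\ filterlim rho (at_right 0) (at_right 0) /\
    at_right 0 (fun r => forall t, lam * r <= t <= r -> lam' * rho r <= eta t <= rho r).
Proof.
  intros Hlam. exists (lam / 2), (fun r => 2 * r). split; [lra|split].
  - intros P HP. apply at_right0_iff in HP as (d & Hd & HP).
    apply at_right0_iff. exists (d / 2). split; [lra|]. intros r Hr. apply HP. lra.
  - apply at_right0_iff. exists (1 / 2). split; [lra|]. intros r Hr t Ht.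
    assert (0 < lam * r) by nra.
    pose proof (eta_between t ltac:(lra)). lra.
Qed.

Lemma eta_one_minus_dilation lam : 0 < lam < 1 ->
  exists lam' rho, 0 < lam' < 1 /\ filterlim rho (at_right 0) (Rbar_locally p_infty) /\
    at_right 0 (fun r => forall t, lam * r <= t <= r ->
                           lam' * rho r <= eta (1 - t) <= rho r).
Proof.
  intros Hlam. exists (lam / 2), (fun r => / (lam * r)). split; [lra|split].
  - intros P [N HN]. apply at_right0_iff.
    exists (/ (lam * (Rabs N + 1))). split.
    { apply Rinv_0_lt_compat. pose proof (Rabs_pos N). nra. }
    intros r Hr. apply HN. pose proof (Rle_abs N).
    assert (Hlr : lam * r < / (Rabs N + 1)).
    { replace (/ (Rabs N + 1)) with (lam * / (lam * (Rabs N + 1)))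
        by (field; pose proof (Rabs_pos N); lra).
      apply Rmult_lt_compat_l; lra. }
    assert (/ (Rabs N + 1) > 0) by (apply Rinv_0_lt_compat; pose proof (Rabs_pos N); lra).
    apply Rinv_lt_contravar in Hlr; [|apply Rmult_lt_0_compat; nra].
    rewrite Rinv_inv in Hlr. lra.
  - apply at_right0_iff. exists (1 / 2). split; [lra|]. intros r Hr t Ht.
    assert (0 < lam * r) by nra.
    rewrite eta_one_minus by lra.
    assert (/ r <= / t) by (apply Rinv_le_contravar; lra).
    assert (/ t <= / (lam * r)) by (apply Rinv_le_contravar; lra).
    assert (2 <= / r) by (apply (Rmult_le_reg_r r); [lra|]; rewrite Rinv_l by lra; lra).
    replace (lam / 2 * / (lam * r)) with (/ r / 2) by (field; lra). lra.
Qed.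

Lemma SO_I_comp_eta_of_slowly_osc (a : R -> C) :
  Cb Rplus_set a -> slowly_osc_C (at_right 0) a -> slowly_osc_C (Rbar_locally p_infty) a ->
  SO_I (fun y => a (eta y)).
Proof.
  intros [Hcont [B HB]] H0 Hoo. apply SO_I_of_slowly_osc.
  - split.
    + intros y Hy. apply continuous_comp.
      * apply continuous_eta. apply Hy.
      * apply Hcont, eta_pos, Hy.
    + exists B. intros y Hy. apply HB, eta_pos, Hy.
  - exact (slowly_osc_comp _ _ _ a eta eta_dilation_at0 H0).
  - exact (slowly_osc_comp _ _ _ a (fun x => eta (1 - x)) eta_one_minus_dilation Hoo).
Qed.

Lemma SO_I_comp_eta (a : R -> C) : SO_Rplus a -> SO_I (fun y => a (eta y)).
Proof.
  intros Ha. apply SO_Rplus_slowly_osc in Ha as (Hcb & H0 & Hoo).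
  now apply SO_I_comp_eta_of_slowly_osc.
Qed.

Lemma slowly_osc_C_RtoC F {FF : Filter F} (f : R -> R) :
  slowly_osc_C F (fun x => RtoC (f x)) <-> slowly_osc_R F f.
Proof.
  assert (Hdist : forall a b : R, Cmod (RtoC a - RtoC b) = Rabs (a - b)).
  { intros a b. rewrite <- RtoC_minus. apply Cmod_R. }
  split; intros Hf lam Hlam eps Heps; generalize (Hf lam Hlam eps Heps);
    apply filter_imp; intros r Hr t tau Ht Htau.
  - rewrite <- Hdist. now apply Hr.
  - rewrite Hdist. now apply Hr.
Qed.

Lemma continuous_RtoC (f : R -> R) x : continuous f x -> continuous (fun y => RtoC (f y)) x.
Proof.
  intros Hf. apply filterlim_locally. intros eps.
  generalize (proj1 (filterlim_locally _ _) Hf eps). apply filter_imp.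
  intros y Hy. split; [exact Hy|apply ball_center].
Qed.

Lemma continuous_of_RtoC (f : R -> R) x :
  continuous (fun y => RtoC (f y)) x -> continuous f x.
Proof.
  intros Hf. apply filterlim_locally. intros eps.
  generalize (proj1 (filterlim_locally _ _) Hf eps). apply filter_imp.
  intros y [Hy _]. exact Hy.
Qed.

Lemma SO_I_comp_eta_real (h : R -> R) B :
  (forall t, 0 < t -> continuous h t) -> (forall t, 0 < t -> Rabs (h t) <= B) ->
  slowly_osc_R (at_right 0) h -> slowly_osc_R (Rbar_locally p_infty) h ->
  SO_I (fun y => RtoC (h (eta y))).
Proof.
  intros Hcont HB H0 Hoo. apply (SO_I_comp_eta_of_slowly_osc (fun t => RtoC (h t))).
  - split.
    + intros t Ht. apply continuous_RtoC, Hcont, Ht.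
    + exists B. intros t Ht. rewrite Cmod_R. apply HB, Ht.
  - exact (proj2 (slowly_osc_C_RtoC _ h) H0).
  - exact (proj2 (slowly_osc_C_RtoC _ h) Hoo).
Qed.

Section RealSlowOscillation.

Context (F : (R -> Prop) -> Prop) {FF : Filter F}.
Hypothesis F_pos : F (fun r => 0 < r).
Hypothesis F_dilate : forall lam, 0 < lam < 1 -> forall P, F P ->
  F (fun r => forall t, lam * r <= t <= r -> P t).

Lemma slowly_osc_R_const c : slowly_osc_R F (fun _ => c).
Proof.
  intros lam Hlam eps Heps. apply filter_forall. intros r t tau _ _.
  rewrite Rminus_diag, Rabs_R0. lra.
Qed.

Lemma slowly_osc_R_asymptotic (f g : R -> R) :
  (forall eps, 0 < eps -> F (fun t => Rabs (f t - g t) <= eps)) ->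
  slowly_osc_R F g -> slowly_osc_R F f.
Proof.
  intros Hfg Hg lam Hlam eps Heps.
  pose proof (F_dilate lam Hlam _ (Hfg (eps / 3) ltac:(lra))) as Hclose.
  generalize (filter_and _ _ Hclose (Hg lam Hlam (eps / 3) ltac:(lra))).
  apply filter_imp. intros r [Hc Hosc] t tau Ht Htau.
  pose proof (Hc t Ht). pose proof (Hc tau Htau). pose proof (Hosc t tau Ht Htau).
  replace (f t - f tau) with ((f t - g t) + (g t - g tau) - (f tau - g tau)) by ring.
  pose proof (Rabs_triang (f t - g t + (g t - g tau)) (- (f tau - g tau))).
  pose proof (Rabs_triang (f t - g t) (g t - g tau)).
  rewrite Rabs_Ropp in *. unfold Rminus at 1. lra.
Qed.

Lemma slowly_osc_R_mult (f g : R -> R) B :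
  (forall x, 0 < x -> Rabs (f x) <= B) -> (forall x, 0 < x -> Rabs (g x) <= B) ->
  slowly_osc_R F f -> slowly_osc_R F g -> slowly_osc_R F (fun x => f x * g x).
Proof.
  intros Bf Bg Hf Hg lam Hlam eps Heps.
  assert (HB : 0 <= B) by (pose proof (Bf 1 ltac:(lra)); pose proof (Rabs_pos (f 1)); lra).
  set (e := eps / (2 * (B + 1))).
  assert (He : 0 < e) by (apply Rdiv_lt_0_compat; lra).
  assert (Heps_e : eps = 2 * (B + 1) * e) by (unfold e; field; lra).
  generalize (filter_and _ _ F_pos (filter_and _ _ (Hf lam Hlam e He) (Hg lam Hlam e He))).
  apply filter_imp. intros r (Hr & Hfr & Hgr) t tau Ht Htau.
  assert (0 < lam * r) by nra.
  replace (f t * g t - f tau * g tau) with (f t * (g t - g tau) + g tau * (f t - f tau))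
    by ring.
  eapply Rle_trans; [apply Rabs_triang|]. rewrite !Rabs_mult.
  pose proof (Hfr t tau Ht Htau). pose proof (Hgr t tau Ht Htau).
  pose proof (Bf t ltac:(lra)). pose proof (Bg tau ltac:(lra)).
  pose proof (Rabs_pos (f t)). pose proof (Rabs_pos (g tau)).
  pose proof (Rabs_pos (g t - g tau)). pose proof (Rabs_pos (f t - f tau)).
  rewrite Heps_e. nra.
Qed.

Lemma slowly_osc_R_lipschitz (f phi : R -> R) c1 c2 L :
  (forall x, 0 < x -> c1 <= f x <= c2) ->
  (forall u v, c1 <= u <= c2 -> c1 <= v <= c2 -> Rabs (phi u - phi v) <= L * Rabs (u - v)) ->
  0 < L -> slowly_osc_R F f -> slowly_osc_R F (fun x => phi (f x)).
Proof.
  intros Bf Hphi HL Hf lam Hlam eps Heps.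
  assert (He : 0 < eps / L) by (apply Rdiv_lt_0_compat; lra).
  generalize (filter_and _ _ F_pos (Hf lam Hlam _ He)).
  apply filter_imp. intros r [Hr Hfr] t tau Ht Htau.
  assert (0 < lam * r) by nra.
  eapply Rle_trans; [apply Hphi; apply Bf; lra|].
  replace eps with (L * (eps / L)) by (field; lra).
  apply Rmult_le_compat_l; [lra|]. now apply Hfr.
Qed.

End RealSlowOscillation.

(** * Derivative bounds for [alpha] and the conjugation factor *)

Lemma MVT_Derive (f : R -> R) s t : s < t -> (forall c, s <= c <= t -> ex_derive f c) ->
  exists c, s < c < t /\ f t - f s = Derive f c * (t - s).
Proof.
  intros Hst Hf. destruct (MVT_cor2 f (Derive f) s t Hst) as (c & Hc & Hct).
  - intros c Hc. apply is_derive_Reals, Derive_correct, Hf, Hc.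
  - now exists c.
Qed.

Lemma increasing_not_locally_Derive_nonpos (f : R -> R) x :
  (forall u v, 0 < u -> 0 < v -> u < v -> f u < f v) ->
  (forall u, 0 < u -> ex_derive f u) -> 0 < x ->
  ~ locally x (fun y => Derive f y <= 0).
Proof.
  intros Hincr Hf Hx [d Hd].
  destruct (MVT_Derive f x (x + d / 2)) as (c & Hc & Hmvt).
  - pose proof (cond_pos d). lra.
  - intros c Hc. apply Hf. lra.
  - assert (Derive f c <= 0).
    { apply Hd. change (Rabs (c - x) < d). rewrite Rabs_right; lra. }
    assert (f x < f (x + d / 2)) by (apply Hincr; pose proof (cond_pos d); lra).
    pose proof (cond_pos d). nra.
Qed.

(* Rocq's [ln] vanishes on nonpositive reals, so continuity of [ln o f] at a zero of
   [f] forbids [f] from taking small positive values nearby. *)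
Lemma locally_nonpos_of_ln_continuous (f : R -> R) x :
  continuous f x -> continuous (fun y => ln (f y)) x -> f x <= 0 ->
  locally x (fun y => f y <= 0).
Proof.
  intros Hf Hlnf [Hneg|Hzero].
  - pose proof (Hf _ (open_lt 0 (f x) Hneg)) as Hnear. unfold filtermap in Hnear.
    generalize Hnear. apply filter_imp. intros y Hy. lra.
  - assert (Hfx : f x < exp (-1)) by (rewrite Hzero; apply exp_pos).
    assert (Hlnfx : -1 < ln (f x)).
    { rewrite Hzero. unfold ln. destruct Rlt_dec as [Habs|_]; [exfalso; lra|lra]. }
    pose proof (Hf _ (open_lt _ _ Hfx)) as Hsmall.
    pose proof (Hlnf _ (open_gt _ _ Hlnfx)) as Hlnbig.
    unfold filtermap in Hsmall, Hlnbig.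
    generalize (filter_and _ _ Hsmall Hlnbig). apply filter_imp. intros y [Hy Hlny].
    destruct (Rle_or_lt (f y) 0) as [Hle|Hpos]; [exact Hle|].
    assert (ln (f y) < ln (exp (-1))) by (apply ln_increasing; assumption).
    rewrite ln_exp in *. lra.
Qed.

Lemma exp_le x y : x <= y -> exp x <= exp y.
Proof. intros [Hxy| ->]; [left; now apply exp_increasing|apply Rle_refl]. Qed.

Lemma SOS_Rplus_Derive_bounds alpha : SOS_Rplus alpha ->
  exists m M, 0 < m /\ forall x, 0 < x -> m <= Derive alpha x <= M.
Proof.
  intros ((_ & _ & Hincr & Hder & Hcont & _) & _ & [Hln [M0 HM0]] & _).
  assert (Hpos : forall x, 0 < x -> 0 < Derive alpha x).
  { intros x Hx. destruct (Rlt_or_le 0 (Derive alpha x)) as [Hlt|Hle]; [exact Hlt|].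
    exfalso. apply (increasing_not_locally_Derive_nonpos alpha x Hincr Hder Hx).
    apply locally_nonpos_of_ln_continuous; [apply Hcont, Hx| |exact Hle].
    apply continuous_of_RtoC, Hln, Hx. }
  exists (exp (- M0)), (exp M0). split; [apply exp_pos|]. intros x Hx.
  specialize (HM0 x Hx). rewrite Cmod_R in HM0. apply Rabs_le_between in HM0.
  rewrite <- (exp_ln _ (Hpos x Hx)). split; apply exp_le; lra.
Qed.

Lemma Rinv_lipschitz m M u v : 0 < m -> m <= u <= M -> m <= v <= M ->
  Rabs (/ u - / v) <= / (m * m) * Rabs (u - v).
Proof.
  intros Hm Hu Hv.
  replace (/ u - / v) with ((u - v) * - / (u * v)) by (field; lra).
  rewrite Rabs_mult, Rabs_Ropp, Rmult_comm. apply Rmult_le_compat_r; [apply Rabs_pos|].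
  rewrite Rabs_right by (left; apply Rinv_0_lt_compat; nra).
  apply Rinv_le_contravar; nra.
Qed.

Lemma Rabs_ln_le c1 c2 x : 0 < c1 -> c1 <= x <= c2 ->
  Rabs (ln x) <= Rabs (ln c1) + Rabs (ln c2).
Proof.
  intros Hc1 Hx.
  assert (ln c1 <= ln x) by (apply ln_le; lra). assert (ln x <= ln c2) by (apply ln_le; lra).
  apply Rabs_le_between. pose proof (Rabs_pos (ln c1)). pose proof (Rabs_pos (ln c2)).
  pose proof (Rle_abs (ln c2)). pose proof (Rle_abs (- ln c1)). rewrite Rabs_Ropp in *. lra.
Qed.

Lemma Rpower_lipschitz c1 c2 q u v : 0 < c1 -> c1 <= u <= c2 -> c1 <= v <= c2 ->
  Rabs (Rpower u q - Rpower v q) <=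
  (Rabs q * exp (Rabs (q - 1) * (Rabs (ln c1) + Rabs (ln c2))) + 1) * Rabs (u - v).
Proof.
  intros Hc1 Hu Hv.
  pose proof (Rmin_glb v u c1 ltac:(lra) ltac:(lra)).
  pose proof (Rmax_lub v u c2 ltac:(lra) ltac:(lra)).
  destruct (MVT_abs (fun x => Rpower x q) (fun x => q * Rpower x (q - 1)) v u)
    as (c & -> & Hc).
  { intros c Hc. apply derivable_pt_lim_power. lra. }
  rewrite (Rabs_minus_sym u v). apply Rmult_le_compat_r; [apply Rabs_pos|].
  rewrite Rabs_mult, (Rabs_right (Rpower c (q - 1))) by (left; apply exp_pos).
  assert (Hpow : Rpower c (q - 1) <= exp (Rabs (q - 1) * (Rabs (ln c1) + Rabs (ln c2)))).
  { unfold Rpower. apply exp_le. eapply Rle_trans; [apply Rle_abs|].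
    rewrite Rabs_mult. apply Rmult_le_compat_l; [apply Rabs_pos|].
    apply Rabs_ln_le; lra. }
  pose proof (Rabs_pos q). pose proof (exp_pos ((q - 1) * ln c)).
  assert (Rabs q * Rpower c (q - 1) <=
          Rabs q * exp (Rabs (q - 1) * (Rabs (ln c1) + Rabs (ln c2))))
    by (apply Rmult_le_compat_l; assumption). lra.
Qed.

(* In the variable [t = eta y], [conj_factor alpha t] is [(1 - alpha_tilde alpha y) / (1 - y)]
   and [conj_Derive alpha t] is the derivative of [alpha_tilde alpha] at [y]. *)
Definition conj_factor (alpha : R -> R) (t : R) : R := (1 + t) / (1 + alpha t).

Definition conj_Derive (alpha : R -> R) (t : R) : R :=
  Derive alpha t * conj_factor alpha t * conj_factor alpha t.

Section DerivativeBounds.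

Variables (alpha : R -> R) (m M : R).
Hypothesis m_pos : 0 < m.
Hypothesis alpha_pos : forall x, 0 < x -> 0 < alpha x.
Hypothesis alpha_derivable : forall x, 0 < x -> ex_derive alpha x.
Hypothesis Derive_bounds : forall x, 0 < x -> m <= Derive alpha x <= M.

Let m_le_M : m <= M.
Proof. pose proof (Derive_bounds 1 ltac:(lra)). lra. Qed.

Lemma alpha_increment s t : 0 < s < t -> m * (t - s) <= alpha t - alpha s <= M * (t - s).
Proof.
  intros Hst. destruct (MVT_Derive alpha s t) as (c & Hc & ->); [lra| |].
  - intros c Hc. apply alpha_derivable. lra.
  - pose proof (Derive_bounds c ltac:(lra)). split; apply Rmult_le_compat_r; lra.
Qed.

(* Apply the increment bound on [[s, t]] with [s] so small that [m s] is half the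
   hypothetical defect [m t - alpha t], and use [alpha s > 0]. *)
Lemma alpha_ge_linear t : 0 < t -> m * t <= alpha t.
Proof.
  intros Ht. destruct (Rle_or_lt (m * t) (alpha t)) as [Hle|Hlt]; [exact Hle|exfalso].
  pose proof (alpha_pos t Ht).
  set (s := (m * t - alpha t) / (2 * m)).
  assert (Hms : m * s = (m * t - alpha t) / 2) by (unfold s; field; lra).
  assert (Hs : 0 < s < t) by (split; nra).
  pose proof (alpha_increment s t Hs). pose proof (alpha_pos s (proj1 Hs)). nra.
Qed.

Hypothesis alpha_onto : forall y, 0 < y -> exists x, 0 < x /\ alpha x = y.
Hypothesis alpha_incr : forall x y, 0 < x -> 0 < y -> x < y -> alpha x < alpha y.

(* Surjectivity gives points [x] with [alpha x] as small as we like; they lie below [t]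
   by monotonicity, and the increment bound on [[x, t]] concludes. *)
Lemma alpha_le_linear t : 0 < t -> alpha t <= M * t.
Proof.
  intros Ht. destruct (Rle_or_lt (alpha t) (M * t)) as [Hle|Hlt]; [exact Hle|exfalso].
  pose proof (alpha_pos t Ht).
  pose proof (Rmin_l ((alpha t - M * t) / 2) (alpha t / 2)).
  pose proof (Rmin_r ((alpha t - M * t) / 2) (alpha t / 2)).
  set (y := Rmin ((alpha t - M * t) / 2) (alpha t / 2)) in *.
  assert (Hy : 0 < y) by (apply Rmin_pos; lra).
  destruct (alpha_onto y Hy) as (x & Hx & Hxy).
  destruct (Rlt_or_le x t) as [Hxt|Htx].
  - pose proof (alpha_increment x t (conj Hx Hxt)).
    assert (0 <= M * x) by (pose proof m_le_M; apply Rmult_le_pos; lra). lra.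
  - destruct Htx as [Htx| <-]; [pose proof (alpha_incr t x Ht Hx Htx)|]; lra.
Qed.

Lemma conj_factor_bounds t : 0 < t -> / (1 + M) <= conj_factor alpha t <= 1 + / m.
Proof.
  intros Ht. pose proof (alpha_ge_linear t Ht). pose proof (alpha_le_linear t Ht).
  pose proof (alpha_pos t Ht). pose proof m_le_M.
  unfold conj_factor. split.
  - apply Rle_div_r; [lra|]. apply (Rmult_le_reg_l (1 + M)); [lra|].
    rewrite <- Rmult_assoc, Rinv_r, Rmult_1_l by lra. nra.
  - apply Rle_div_l; [lra|].
    assert (Hinv : / m * (m * t) = t) by (field; lra).
    assert (/ m * (m * t) <= / m * alpha t)
      by (apply Rmult_le_compat_l; [left; apply Rinv_0_lt_compat|]; lra).
    pose proof (Rinv_0_lt_compat m m_pos). nra.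
Qed.

Lemma conj_factor_near0 eps : 0 < eps ->
  at_right 0 (fun t => Rabs (conj_factor alpha t - 1) <= eps).
Proof.
  intros Heps. pose proof m_le_M. apply at_right0_iff.
  exists (eps / (1 + M)). split; [apply Rdiv_lt_0_compat; lra|]. intros t [Ht Htd].
  apply Rlt_div_r in Htd; [|lra].
  pose proof (alpha_pos t Ht). pose proof (alpha_le_linear t Ht).
  replace (conj_factor alpha t - 1) with ((t - alpha t) / (1 + alpha t))
    by (unfold conj_factor; field; lra).
  apply Rabs_le. split.
  - apply Rle_div_r; [lra|]. nra.
  - apply Rle_div_l; [lra|]. nra.
Qed.

Lemma conj_factor_slowly_osc_at0 : slowly_osc_R (at_right 0) (conj_factor alpha).
Proof.
  exact (slowly_osc_R_asymptotic _ at_right0_dilate _ (fun _ => 1)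
           conj_factor_near0 (slowly_osc_R_const _ 1)).
Qed.

(* By the mean value theorem on [[U s, s]], [alpha s / s] is an average of [Derive alpha]
   over that interval up to [O(U)], and slow oscillation makes the average close to
   [Derive alpha s]. *)
Lemma ratio_near_Derive_at_infty :
  slowly_osc_R (Rbar_locally p_infty) (Derive alpha) -> forall eps, 0 < eps ->
  Rbar_locally p_infty (fun s => Rabs (alpha s / s - Derive alpha s) <= eps).
Proof.
  intros Hso eps Heps. pose proof m_le_M.
  pose proof (Rmin_l (1 / 2) (eps / (4 * M))). pose proof (Rmin_r (1 / 2) (eps / (4 * M))).
  set (U := Rmin (1 / 2) (eps / (4 * M))) in *.
  assert (HU : 0 < U) by (apply Rmin_pos; [|apply Rdiv_lt_0_compat]; lra).
  assert (HMU : M * U <= eps / 4).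
  { replace (eps / 4) with (M * (eps / (4 * M))) by (field; lra).
    apply Rmult_le_compat_l; lra. }
  destruct (Hso U ltac:(lra) (eps / 2) ltac:(lra)) as [N HN].
  exists (Rmax N 0). intros s Hs.
  pose proof (Rmax_l N 0). pose proof (Rmax_r N 0).
  assert (HUs : 0 < U * s) by nra.
  destruct (MVT_Derive alpha (U * s) s) as (c & Hc & Hmvt); [nra| |].
  { intros c Hc. apply alpha_derivable. lra. }
  pose proof (HN s ltac:(lra) c s ltac:(lra) ltac:(nra)) as Hosc.
  apply Rabs_le_between in Hosc.
  pose proof (Derive_bounds c ltac:(lra)).
  pose proof (alpha_pos (U * s) HUs). pose proof (alpha_le_linear (U * s) HUs).
  set (w := alpha (U * s) / s).
  assert (Hw : w * s = alpha (U * s)) by (unfold w; field; lra).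
  assert (Hw0 : 0 < w) by nra. assert (HwU : w <= M * U) by nra.
  replace (alpha s / s - Derive alpha s)
    with ((Derive alpha c - Derive alpha s) - U * Derive alpha c + w)
    by (unfold w; field_simplify; [nra|lra|lra]).
  assert (0 <= U * Derive alpha c <= M * U) by (split; nra).
  apply Rabs_le. lra.
Qed.

Lemma ratio_bounds t : 0 < t -> m <= alpha t / t <= M.
Proof.
  intros Ht. pose proof (alpha_ge_linear t Ht). pose proof (alpha_le_linear t Ht).
  split; [apply Rle_div_r|apply Rle_div_l]; lra.
Qed.

Lemma conj_factor_near_ratio_inv_at_infty eps : 0 < eps ->
  Rbar_locally p_infty (fun t => Rabs (conj_factor alpha t - / (alpha t / t)) <= eps).
Proof.
  intros Heps. pose proof m_le_M.
  exists ((M + 1) / (m * m * eps)). intros t Ht.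
  assert (Hmm : 0 < m * m * eps) by (apply Rmult_lt_0_compat; nra).
  assert (Ht0 : 0 < t) by (pose proof (Rdiv_lt_0_compat (M + 1) _ ltac:(lra) Hmm); lra).
  apply Rlt_div_l in Ht; [|exact Hmm].
  pose proof (alpha_ge_linear t Ht0). pose proof (alpha_le_linear t Ht0).
  pose proof (alpha_pos t Ht0).
  replace (conj_factor alpha t - / (alpha t / t))
    with ((alpha t - t) / (alpha t * (1 + alpha t))) by (unfold conj_factor; field; lra).
  set (a := alpha t) in *.
  assert (Hnum : Rabs (a - t) <= (M + 1) * t) by (apply Rabs_le; nra).
  unfold Rdiv. rewrite Rabs_mult, Rabs_inv, (Rabs_right (a * (1 + a))) by nra.
  rewrite <- Rdiv_def. apply Rle_div_l; [nra|].
  assert (m * t * (m * t) <= a * a) by (apply Rmult_le_compat; nra).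
  nra.
Qed.

Lemma conj_factor_slowly_osc_at_infty :
  slowly_osc_R (Rbar_locally p_infty) (Derive alpha) ->
  slowly_osc_R (Rbar_locally p_infty) (conj_factor alpha).
Proof.
  intros Hso. pose proof m_le_M.
  assert (Hratio : slowly_osc_R (Rbar_locally p_infty) (fun t => alpha t / t))
    by exact (slowly_osc_R_asymptotic _ p_infty_dilate _ _
                (ratio_near_Derive_at_infty Hso) Hso).
  assert (Hinv : slowly_osc_R (Rbar_locally p_infty) (fun t => / (alpha t / t))).
  { apply (slowly_osc_R_lipschitz _ p_infty_pos _ Rinv m M (/ (m * m)));
      [exact ratio_bounds| |apply Rinv_0_lt_compat; nra|exact Hratio].
    intros u v Hu Hv. now apply (Rinv_lipschitz m M). }
  exact (slowly_osc_R_asymptotic _ p_infty_dilate _ _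
           conj_factor_near_ratio_inv_at_infty Hinv).
Qed.

Lemma conj_Derive_bounds t : 0 < t ->
  m * / (1 + M) * / (1 + M) <= conj_Derive alpha t <= M * (1 + / m) * (1 + / m).
Proof.
  intros Ht. pose proof (Derive_bounds t Ht). pose proof (conj_factor_bounds t Ht).
  pose proof m_le_M. assert (0 < / (1 + M)) by (apply Rinv_0_lt_compat; lra).
  unfold conj_Derive. split; repeat apply Rmult_le_compat; nra.
Qed.

Lemma conj_Derive_slowly_osc F {FF : Filter F} : F (fun r => 0 < r) ->
  slowly_osc_R F (Derive alpha) -> slowly_osc_R F (conj_factor alpha) ->
  slowly_osc_R F (conj_Derive alpha).
Proof.
  intros Fpos HD Hg. pose proof m_le_M.
  assert (Hm1 : 0 < / m) by (apply Rinv_0_lt_compat; lra).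
  set (B := M * (1 + / m) + M + (1 + / m)).
  assert (HgB : forall t, 0 < t -> Rabs (conj_factor alpha t) <= B).
  { intros t Ht. pose proof (conj_factor_bounds t Ht).
    assert (0 < / (1 + M)) by (apply Rinv_0_lt_compat; lra).
    rewrite Rabs_right by lra. unfold B. nra. }
  assert (HDB : forall t, 0 < t -> Rabs (Derive alpha t) <= B).
  { intros t Ht. pose proof (Derive_bounds t Ht).
    rewrite Rabs_right by lra. unfold B. nra. }
  assert (HDgB : forall t, 0 < t -> Rabs (Derive alpha t * conj_factor alpha t) <= B).
  { intros t Ht. pose proof (Derive_bounds t Ht). pose proof (conj_factor_bounds t Ht).
    assert (0 < / (1 + M)) by (apply Rinv_0_lt_compat; lra).
    rewrite Rabs_right by nra. unfold B.
    assert (Derive alpha t * conj_factor alpha t <= M * (1 + / m))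
      by (apply Rmult_le_compat; lra). lra. }
  apply (slowly_osc_R_mult F Fpos _ _ B HDgB HgB); [|exact Hg].
  exact (slowly_osc_R_mult F Fpos _ _ B HDB HgB HD Hg).
Qed.

Lemma continuous_conj_factor t : 0 < t -> continuous (conj_factor alpha) t.
Proof.
  intros Ht. apply (ex_derive_continuous (K := R_AbsRing) (V := R_NormedModule)).
  pose proof (alpha_pos t Ht). unfold conj_factor. auto_derive.
  split; [apply alpha_derivable, Ht|]. lra.
Qed.

End DerivativeBounds.

(** * The conjugated shift [alpha_tilde] *)

Lemma alpha_tilde_ratio alpha y : I_set y -> 0 < alpha (eta y) ->
  (1 - alpha_tilde alpha y) / (1 - y) = conj_factor alpha (eta y).
Proof.
  intros [Hy0 Hy1] Ha. unfold alpha_tilde, eta_inv, conj_factor.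
  set (s := alpha (eta y)) in *. unfold eta. field. split; lra.
Qed.

Lemma is_derive_alpha_tilde f y : I_set y -> 0 < f (eta y) -> ex_derive f (eta y) ->
  is_derive (alpha_tilde f) y (conj_Derive f (eta y)).
Proof.
  intros [Hy0 Hy1] Hpos Hf.
  assert (Heta : is_derive eta y (/ (1 - y) ^ 2))
    by (unfold eta; auto_derive; [lra|field; lra]).
  assert (Heta_inv : is_derive eta_inv (f (eta y)) (/ (1 + f (eta y)) ^ 2))
    by (unfold eta_inv; auto_derive; [lra|field; lra]).
  pose proof (is_derive_comp eta_inv (fun y => f (eta y)) y _ _ Heta_inv
                (is_derive_comp f eta y _ _ (Derive_correct f _ Hf) Heta)) as Hcomp.
  unfold alpha_tilde.
  replace (conj_Derive f (eta y))
    with (scal (scal (/ (1 - y) ^ 2) (Derive f (eta y))) (/ (1 + f (eta y)) ^ 2));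
    [exact Hcomp|].
  unfold conj_Derive, conj_factor, scal; simpl; unfold mult; simpl.
  unfold eta in *. field. split; lra.
Qed.

Lemma Derive_alpha_tilde f y : I_set y -> 0 < f (eta y) -> ex_derive f (eta y) ->
  Derive (alpha_tilde f) y = conj_Derive f (eta y).
Proof. intros Hy Hpos Hf. now apply is_derive_unique, is_derive_alpha_tilde. Qed.

Lemma continuous_conj_Derive f t : 0 < t ->
  (forall x, 0 < x -> 0 < f x) -> (forall x, 0 < x -> ex_derive f x) ->
  continuous (Derive f) t -> continuous (conj_Derive f) t.
Proof.
  intros Ht Hpos Hder Hcont.
  pose proof (continuous_conj_factor f Hpos Hder t Ht) as Hg. unfold conj_Derive.
  apply (continuous_mult (K := R_AbsRing)); [apply (continuous_mult (K := R_AbsRing))|];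
    assumption.
Qed.

Lemma continuous_Derive_alpha_tilde f y : I_set y ->
  (forall t, 0 < t -> 0 < f t) -> (forall t, 0 < t -> ex_derive f t) ->
  (forall t, 0 < t -> continuous (Derive f) t) ->
  continuous (Derive (alpha_tilde f)) y.
Proof.
  intros Hy Hpos Hder Hcont.
  apply (continuous_ext_loc _ (fun z => conj_Derive f (eta z))).
  - generalize (locally_I y Hy). apply filter_imp. intros z Hz.
    symmetry. apply Derive_alpha_tilde; [exact Hz|apply Hpos|apply Hder]; apply eta_pos, Hz.
  - apply continuous_comp; [apply continuous_eta, Hy|].
    apply continuous_conj_Derive; [apply eta_pos, Hy|assumption..|apply Hcont, eta_pos, Hy].
Qed.

Lemma alpha_tilde_I f y : (forall x, 0 < x -> 0 < f x) -> I_set y -> I_set (alpha_tilde f y).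
Proof. intros Hf Hy. apply eta_inv_I, Hf, eta_pos, Hy. Qed.

Lemma alpha_tilde_comp f g y :
  0 < g (eta y) -> alpha_tilde f (alpha_tilde g y) = eta_inv (f (g (eta y))).
Proof. intros Hg. unfold alpha_tilde at 1 2. now rewrite eta_eta_inv. Qed.

Lemma alpha_tilde_eta_inv f s : 0 < s -> alpha_tilde f (eta_inv s) = eta_inv (f s).
Proof. intros Hs. unfold alpha_tilde. now rewrite eta_eta_inv. Qed.

Lemma orient_diffeo_alpha_tilde alpha :
  orient_diffeo Rplus_set alpha -> orient_diffeo I_set (alpha_tilde alpha).
Proof.
  intros (Hpos & Honto & Hincr & Hder & Hcont & beta & Hbeta & Hbeta_alpha & Hbder & Hbcont).
  assert (Hbpos : forall y, 0 < y -> 0 < beta y) by (intros y Hy; apply Hbeta, Hy).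
  split; [|split; [|split; [|split; [|split]]]].
  - intros y Hy. apply alpha_tilde_I; assumption.
  - intros y Hy. destruct (Honto (eta y) (eta_pos y Hy)) as (x & Hx & Hxy).
    exists (eta_inv x). split; [apply eta_inv_I, Hx|].
    rewrite alpha_tilde_eta_inv, Hxy by exact Hx. apply eta_inv_eta, Hy.
  - intros x y Hx Hy Hxy. unfold alpha_tilde.
    apply eta_inv_lt; [apply Hpos, eta_pos, Hx|apply Hpos, eta_pos, Hy|].
    apply Hincr; [apply eta_pos, Hx|apply eta_pos, Hy|now apply eta_lt].
  - intros y Hy. eexists. apply is_derive_alpha_tilde; [exact Hy|apply Hpos|apply Hder];
      apply eta_pos, Hy.
  - intros y Hy. now apply continuous_Derive_alpha_tilde.
  - exists (alpha_tilde beta). split; [|split; [|split]].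
    + intros y Hy. split; [now apply alpha_tilde_I|].
      rewrite alpha_tilde_comp by (apply Hbpos, eta_pos, Hy).
      rewrite (proj2 (Hbeta _ (eta_pos y Hy))). apply eta_inv_eta, Hy.
    + intros x Hx. rewrite alpha_tilde_comp by (apply Hpos, eta_pos, Hx).
      rewrite Hbeta_alpha by (apply eta_pos, Hx). apply eta_inv_eta, Hx.
    + intros y Hy. eexists. apply is_derive_alpha_tilde; [exact Hy|apply Hbpos|apply Hbder];
        apply eta_pos, Hy.
    + intros y Hy. now apply continuous_Derive_alpha_tilde.
Qed.

Lemma no_fixed_points_alpha_tilde alpha : (forall x, 0 < x -> 0 < alpha x) ->
  no_fixed_points Rplus_set alpha -> no_fixed_points I_set (alpha_tilde alpha).
Proof.
  intros Hpos Hnf y Hy Hfix. apply (Hnf (eta y) (eta_pos y Hy)).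
  rewrite <- (eta_eta_inv (alpha (eta y))) by (apply Hpos, eta_pos, Hy).
  unfold alpha_tilde in Hfix. now rewrite Hfix.
Qed.

Section ConjugatedShift.

Variables (alpha : R -> R) (m M : R).
Hypothesis alpha_diffeo : orient_diffeo Rplus_set alpha.
Hypothesis m_pos : 0 < m.
Hypothesis Derive_bounds : forall x, 0 < x -> m <= Derive alpha x <= M.
Hypothesis Derive_osc_at0 : slowly_osc_R (at_right 0) (Derive alpha).
Hypothesis Derive_osc_at_infty : slowly_osc_R (Rbar_locally p_infty) (Derive alpha).

Let alpha_pos : forall x, 0 < x -> 0 < alpha x := proj1 alpha_diffeo.
Let alpha_onto : forall y, 0 < y -> exists x, 0 < x /\ alpha x = y :=
  proj1 (proj2 alpha_diffeo).
Let alpha_incr : forall x y, 0 < x -> 0 < y -> x < y -> alpha x < alpha y :=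
  proj1 (proj2 (proj2 alpha_diffeo)).
Let alpha_derivable : forall x, 0 < x -> ex_derive alpha x :=
  proj1 (proj2 (proj2 (proj2 alpha_diffeo))).
Let Derive_continuous : forall x, 0 < x -> continuous (Derive alpha) x :=
  proj1 (proj2 (proj2 (proj2 (proj2 alpha_diffeo)))).

Let conj_factor_range := conj_factor_bounds alpha m M m_pos alpha_pos alpha_derivable
  Derive_bounds alpha_onto alpha_incr.
Let conj_factor_osc_at0 := conj_factor_slowly_osc_at0 alpha m M m_pos alpha_pos
  alpha_derivable Derive_bounds alpha_onto alpha_incr.
Let conj_factor_osc_at_infty := conj_factor_slowly_osc_at_infty alpha m M m_pos alpha_pos
  alpha_derivable Derive_bounds alpha_onto alpha_incr Derive_osc_at_infty.
Let conj_Derive_osc := conj_Derive_slowly_osc alpha m M m_pos alpha_pos alpha_derivable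
  Derive_bounds alpha_onto alpha_incr.

Let conj_Derive_pos_bounds t : 0 < t ->
  0 < m * / (1 + M) * / (1 + M) /\
  m * / (1 + M) * / (1 + M) <= conj_Derive alpha t <= M * (1 + / m) * (1 + / m).
Proof.
  intros Ht. pose proof (Derive_bounds t Ht).
  assert (0 < / (1 + M)) by (apply Rinv_0_lt_compat; lra).
  split; [apply Rmult_lt_0_compat; [apply Rmult_lt_0_compat|]; assumption|].
  now apply (conj_Derive_bounds alpha m M).
Qed.

Let Derive_alpha_tilde_eq y : I_set y ->
  Derive (alpha_tilde alpha) y = conj_Derive alpha (eta y).
Proof.
  intros Hy. apply Derive_alpha_tilde; [exact Hy|apply alpha_pos|apply alpha_derivable];
    apply eta_pos, Hy.
Qed.

Lemma Cb_ln_Derive_alpha_tilde : Cb I_set (fun y => RtoC (ln (Derive (alpha_tilde alpha) y))).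
Proof.
  split.
  - intros y Hy. apply continuous_RtoC, continuous_comp.
    + exact (continuous_Derive_alpha_tilde alpha y Hy alpha_pos alpha_derivable
               Derive_continuous).
    + apply continuous_ln. rewrite Derive_alpha_tilde_eq by exact Hy.
      pose proof (conj_Derive_pos_bounds _ (eta_pos y Hy)). lra.
  - exists (Rabs (ln (m * / (1 + M) * / (1 + M))) + Rabs (ln (M * (1 + / m) * (1 + / m)))).
    intros y Hy. rewrite Cmod_R, Derive_alpha_tilde_eq by exact Hy.
    pose proof (conj_Derive_pos_bounds _ (eta_pos y Hy)).
    apply Rabs_ln_le; lra.
Qed.

Lemma SO_I_Derive_alpha_tilde : SO_I (fun y => RtoC (Derive (alpha_tilde alpha) y)).
Proof.
  apply (SO_I_ext (fun y => RtoC (conj_Derive alpha (eta y)))).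
  { intros y Hy. now rewrite Derive_alpha_tilde_eq. }
  apply (SO_I_comp_eta_real _ (M * (1 + / m) * (1 + / m))).
  - intros t Ht. exact (continuous_conj_Derive alpha t Ht alpha_pos alpha_derivable
                         (Derive_continuous t Ht)).
  - intros t Ht. pose proof (conj_Derive_pos_bounds t Ht). rewrite Rabs_right; lra.
  - exact (conj_Derive_osc _ _ at_right0_pos Derive_osc_at0 conj_factor_osc_at0).
  - exact (conj_Derive_osc _ _ p_infty_pos Derive_osc_at_infty conj_factor_osc_at_infty).
Qed.

Lemma SOS_I_alpha_tilde : no_fixed_points Rplus_set alpha -> SOS_I (alpha_tilde alpha).
Proof.
  intros Hnf. split; [|split; [|split]].
  - now apply orient_diffeo_alpha_tilde.
  - now apply no_fixed_points_alpha_tilde.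
  - exact Cb_ln_Derive_alpha_tilde.
  - exact SO_I_Derive_alpha_tilde.
Qed.

Variable p : R.
Hypothesis p_pos : 0 < p.

Let c_alpha_p_eq y : I_set y ->
  c_alpha_p alpha p y = Rpower (conj_factor alpha (eta y)) (2 / p).
Proof.
  intros Hy. unfold c_alpha_p. rewrite alpha_tilde_ratio; [reflexivity|exact Hy|].
  apply alpha_pos, eta_pos, Hy.
Qed.

Lemma c_alpha_p_bounds y : I_set y ->
  Rpower (/ (1 + M)) (2 / p) <= c_alpha_p alpha p y <= Rpower (1 + / m) (2 / p).
Proof.
  intros Hy. rewrite c_alpha_p_eq by exact Hy.
  assert (Hq : 0 <= 2 / p) by (left; apply Rdiv_lt_0_compat; lra).
  pose proof (conj_factor_range _ (eta_pos y Hy)).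
  pose proof (Derive_bounds 1 ltac:(lra)).
  assert (0 < / (1 + M)) by (apply Rinv_0_lt_compat; lra).
  split; apply Rle_Rpower_l; lra.
Qed.

Lemma SO_I_c_alpha_p : SO_I (fun y => RtoC (c_alpha_p alpha p y)).
Proof.
  set (q := 2 / p).
  pose proof conj_factor_range as Hg.
  pose proof (Derive_bounds 1 ltac:(lra)).
  assert (Hlo : 0 < / (1 + M)) by (apply Rinv_0_lt_compat; lra).
  apply (SO_I_ext (fun y => RtoC (Rpower (conj_factor alpha (eta y)) q))).
  { intros y Hy. now rewrite c_alpha_p_eq. }
  set (L := Rabs q * exp (Rabs (q - 1) * (Rabs (ln (/ (1 + M))) + Rabs (ln (1 + / m)))) + 1).
  assert (HL : 0 < L).
  { apply Rplus_le_lt_0_compat; [|lra].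
    apply Rmult_le_pos; [apply Rabs_pos|left; apply exp_pos]. }
  apply (SO_I_comp_eta_real (fun t => Rpower (conj_factor alpha t) q) (Rpower (1 + / m) q)).
  - intros t Ht. unfold Rpower. apply continuous_exp_comp.
    apply (continuous_mult (K := R_AbsRing) (fun _ => q)); [apply continuous_const|].
    apply continuous_comp; [now apply continuous_conj_factor|].
    apply continuous_ln. pose proof (Hg t Ht). lra.
  - intros t Ht. pose proof (Hg t Ht). rewrite Rabs_right by (left; apply exp_pos).
    apply Rle_Rpower_l; [left; unfold q; apply Rdiv_lt_0_compat|]; lra.
  - apply (slowly_osc_R_lipschitz _ at_right0_pos _ (fun x => Rpower x q) _ _ L Hg);
      [|exact HL|exact conj_factor_osc_at0].
    intros u v Hu Hv. now apply Rpower_lipschitz.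
  - apply (slowly_osc_R_lipschitz _ p_infty_pos _ (fun x => Rpower x q) _ _ L Hg);
      [|exact HL|exact conj_factor_osc_at_infty].
    intros u v Hu Hv. now apply Rpower_lipschitz.
Qed.

End ConjugatedShift.

Lemma range_on_I_bounds (f : R -> R) lo hi :
  0 < lo -> (forall y, I_set y -> lo <= f y <= hi) ->
  Rbar_lt (Finite 0) (Glb_Rbar (range_on I_set f)) /\
  Rbar_le (Glb_Rbar (range_on I_set f)) (Lub_Rbar (range_on I_set f)) /\
  Rbar_lt (Lub_Rbar (range_on I_set f)) p_infty.
Proof.
  intros Hlo Hf.
  destruct (Glb_Rbar_correct (range_on I_set f)) as [Hglb_lb Hglb].
  destruct (Lub_Rbar_correct (range_on I_set f)) as [Hlub_ub Hlub].
  assert (Hlo_le : Rbar_le (Finite lo) (Glb_Rbar (range_on I_set f))).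
  { apply Hglb. intros z (y & Hy & ->). apply Hf, Hy. }
  assert (Hhi_ge : Rbar_le (Lub_Rbar (range_on I_set f)) (Finite hi)).
  { apply Hlub. intros z (y & Hy & ->). apply Hf, Hy. }
  assert (Hhalf : range_on I_set f (f (1 / 2))) by (exists (1 / 2); split; [red; lra|easy]).
  split; [|split].
  - now apply (Rbar_lt_le_trans _ (Finite lo)).
  - apply (Rbar_le_trans _ (Finite (f (1 / 2)))); [apply Hglb_lb|apply Hlub_ub]; exact Hhalf.
  - now apply (Rbar_le_lt_trans _ (Finite hi)).
Qed.

Theorem lemma3p3 (p : R) (hp : 1 < p) :
  (forall a : R -> C, SO_Rplus a -> SO_I (fun y => a (eta y))) /\
  (forall alpha : R -> R, SOS_Rplus alpha ->
     SOS_I (alpha_tilde alpha) /\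
     SO_I (fun y => RtoC (c_alpha_p alpha p y)) /\
     Rbar_lt (Finite 0) (Glb_Rbar (range_on I_set (c_alpha_p alpha p))) /\
     Rbar_le (Glb_Rbar (range_on I_set (c_alpha_p alpha p)))
             (Lub_Rbar (range_on I_set (c_alpha_p alpha p))) /\
     Rbar_lt (Lub_Rbar (range_on I_set (c_alpha_p alpha p))) p_infty).
Proof.
  split; [exact SO_I_comp_eta|]. intros alpha Halpha.
  destruct (SOS_Rplus_Derive_bounds alpha Halpha) as (m & M & Hm & HD).
  destruct Halpha as (Hdiffeo & Hnf & _ & HSO).
  apply SO_Rplus_slowly_osc in HSO as (_ & HSO0 & HSOoo).
  pose proof (proj1 (slowly_osc_C_RtoC _ _) HSO0) as HD0.
  pose proof (proj1 (slowly_osc_C_RtoC _ _) HSOoo) as HDoo.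
  assert (Hp : 0 < p) by lra.
  split; [|split].
  - now apply (SOS_I_alpha_tilde alpha m M).
  - now apply (SO_I_c_alpha_p alpha m M).
  - exact (range_on_I_bounds _ _ _ (exp_pos _)
             (c_alpha_p_bounds alpha m M Hdiffeo Hm HD p Hp)).
Qed.
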